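(* For nonnegative integers $a_1$: $G(a_1,0,0)=0$ if $a_1$ is odd and $G(a_1,0,0)=1$ if $a_1$ is even; $G(a_1,0,a_1)=1$ for all $a_1$; $G(a_1,1,0)=a_1/2$ for even $a_1$; and $G(a_1,2,0)=\big((a_1+1)/2\big)^2$ for odd $a_1$.
   Context: For integers $a_1,a_2,s$ with $a=a_1+a_2$, $G(a_1,a_2,s)=\sum_m N_m$, the sum over integers $m$ such that $a_1-m,\ a_2-(s-m),\ m,\ s-m$ are all nonnegative (an empty sum is $0$), where $N_m$ is the number of permutations $\pi$ of $[a]$ that are decreasing within each of four consecutive blocks of positions of lengths $a_1-m,\ a_2-(s-m),\ m,\ s-m$ (in this order; arbitrary between blocks), and have no fixed point ($\pi_i=i$) in the first two blocks. *)

From mathcomp Require Import all_boot all_fingroup.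
Set Implicit Arguments. Unset Strict Implicit. Unset Printing Implicit Defensive.

(* Block index (0..3) of the 0-based position i, for four consecutive blocks
   of lengths b1 b2 b3 b4 (the length b4 is implicit: the rest). *)
Definition blk (b1 b2 b3 : nat) (i : nat) : nat :=
  (b1 <= i) + (b1 + b2 <= i) + (b1 + b2 + b3 <= i).

Definition goodperm (a b1 b2 b3 : nat) (p : {perm 'I_a}) : bool :=
  [forall i : 'I_a, forall j : 'I_a,
     ((i < j) && (blk b1 b2 b3 i == blk b1 b2 b3 j)) ==> (p j < p i)] &&
  [forall i : 'I_a, (i < b1 + b2) ==> (p i != i)].

(* N_m for block lengths a1-m, a2-(s-m), m, s-m, with a = a1 + a2. *)
Definition Nm (a1 a2 s m : nat) : nat :=
  #|[set p : {perm 'I_(a1 + a2)} | goodperm (a1 - m) (a2 - (s - m)) m p]|.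

(* G(a1,a2,s): sum over m with a1-m, a2-(s-m), m, s-m all nonnegative. *)
Definition G (a1 a2 s : nat) : nat :=
  \sum_(0 <= m < s.+1 | (m <= a1) && (s - m <= a2)) Nm a1 a2 s m.

From mathcomp Require Import all_boot all_fingroup zify.

(* A permutation that decreases on the first [k] positions is determined by its values on the
   other positions: the first [k] values are the remaining numbers listed in decreasing order.
   With a single block the only candidate is the reversal, which has a fixed point exactly when
   the length is odd.  With one or two trailing singleton blocks the candidates are parametrized
   by the trailing values, and excluding the fixed point the reversed first block may have in its
   middle cuts the parameters down to an interval of length [a1 %/ 2], resp. a product of two
   intervals of length [(a1 + 1) %/ 2]. *)

Set Implicit Arguments.
Unset Strict Implicit.
Unset Printing Implicit Defensive.

Lemma card_ord_range n l r : r <= n -> #|[set i : 'I_n | l <= i < r]| = r - l.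
Proof.
move=> rn; rewrite -sum1dep_card -(big_mkord (fun i => l <= i < r) (fun=> 1)).
rewrite (eq_bigl (fun i => (l <= i) && (i < r))) // -big_nat_widen //.
rewrite big_mkord -(@big_geq_mkord _ _ _ l r xpredT (fun=> 1)).
by rewrite big_const_nat iter_addn_0 mul1n.
Qed.

(* The identity is a junk value, used when [g] is not a bijection of [0, n). *)
Definition nat_perm n (g : nat -> nat) : {perm 'I_n} :=
  match injectiveP (fun i : 'I_n => insubd i (g i)) with
  | ReflectT g_inj => perm g_inj
  | ReflectF _ => 1%g
  end.

Lemma nat_permE n (g : nat -> nat) :
  (forall i, i < n -> g i < n) ->
  (forall i j, i < n -> j < n -> g i = g j -> i = j) ->
  forall i : 'I_n, nat_perm n g i = g i :> nat.
Proof.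
move=> g_lt g_inj i; rewrite /nat_perm.
have gK (j : 'I_n) : val (insubd j (g j)) = g j by rewrite insubdK //; exact: g_lt.
case: injectiveP => [f_inj | []]; first by rewrite permE gK.
by move=> j k /(congr1 val); rewrite !gK => /g_inj eq_jk; apply/val_inj/eq_jk.
Qed.

(* The value [q i] is taken by [p] at some position of [i, k), where [p] is at most [p i]. *)
Lemma leq_decreasing_prefix n k (p q : {perm 'I_n}) (i : 'I_n) :
  (forall j l : 'I_n, j < l < k -> p l < p j) ->
  (forall j : 'I_n, (j < i) || (k <= j) -> p j = q j) -> i < k -> q i <= p i.
Proof.
move=> p_dec pq_agree ik.
have [j pj] : exists j, p j = q i by exists ((p^-1)%g (q i)); rewrite permKV.
have [out | ] := boolP ((j < i) || (k <= j)).
  by move: (pq_agree j out); rewrite pj => /perm_inj ij; rewrite -ij ltnn leqNgt ik in out.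
rewrite negb_or -leqNgt -ltnNge -pj leq_eqVlt => /andP [/orP [/eqP/val_inj-> // | ij] jk].
by rewrite ltnW // p_dec // ij.
Qed.

Lemma eq_perm_decreasing_prefix n k (p q : {perm 'I_n}) :
  (forall i j : 'I_n, i < j < k -> p j < p i) ->
  (forall i j : 'I_n, i < j < k -> q j < q i) ->
  (forall i : 'I_n, k <= i -> p i = q i) -> p = q.
Proof.
move=> p_dec q_dec pq_suffix; apply/permP => i.
elim: {i}_.+1 {-2}i (ltnSn i) => // m IHm i; rewrite ltnS => i_le_m.
have [/pq_suffix // | ik] := leqP k i.
have pq_agree (j : 'I_n) : (j < i) || (k <= j) -> p j = q j.
  by case/orP => [ji | /pq_suffix //]; apply: IHm; apply: leq_trans i_le_m.
apply/val_inj/eqP.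
rewrite eqn_leq (leq_decreasing_prefix q_dec) ?(leq_decreasing_prefix p_dec) //.
all: by move=> j /pq_agree.
Qed.

Lemma goodpermP a b1 b2 b3 (p : {perm 'I_a}) :
  reflect ((forall i j : 'I_a, i < j -> blk b1 b2 b3 i = blk b1 b2 b3 j -> p j < p i) /\
           (forall i : 'I_a, i < b1 + b2 -> p i != i :> nat))
          (goodperm b1 b2 b3 p).
Proof.
apply: (iffP andP) => [[/forallP p_dec /forallP p_fix] | [p_dec p_fix]]; split.
- by move=> i j ij bij; move/forallP/(_ j)/implyP: (p_dec i); apply; rewrite ij bij eqxx.
- by move=> i ib; move/implyP/(_ ib): (p_fix i).
- by apply/forallP => i; apply/forallP => j; apply/implyP => /andP [ij /eqP]; apply: p_dec.
- by apply/forallP => i; apply/implyP => /p_fix.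
Qed.

Lemma G_s0 a1 a2 : G a1 a2 0 = Nm a1 a2 0 0.
Proof. by rewrite /G big_mkcond big_nat1. Qed.

Lemma G_diag a1 : G a1 0 a1 = Nm a1 0 a1 a1.
Proof.
rewrite /G big_mkcond big_nat_recr //= subnn leqnn big_nat big1 ?add0n // => m /andP [_ m_lt].
by rewrite ifF //; apply/negbTE; lia.
Qed.

Definition rev_perm n : {perm 'I_n} := nat_perm n (fun i => n.-1 - i).

Lemma rev_permE n (i : 'I_n) : rev_perm n i = n.-1 - i :> nat.
Proof. by rewrite nat_permE // => [j | j l] *; lia. Qed.

Lemma eq_rev_perm n (p : {perm 'I_n}) :
  (forall i j : 'I_n, i < j -> p j < p i) -> p = rev_perm n.
Proof.
move=> p_dec; apply: (@eq_perm_decreasing_prefix _ n) => [i j /andP [ij _] | i j /andP [ij jn] | i].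
- exact: p_dec.
- by rewrite !rev_permE; lia.
- by have := ltn_ord i; lia.
Qed.

(* The reversal of [0, n) fixes a point iff [n] is odd, and then it fixes [n %/ 2]. *)
Lemma card_goodperm_one_block n b1 b2 b3 :
  (forall i j, i < n -> j < n -> blk b1 b2 b3 i = blk b1 b2 b3 j) ->
  #|[set p : {perm 'I_n} | goodperm b1 b2 b3 p]| = ~~ (odd n && (n %/ 2 < b1 + b2)).
Proof.
move=> blk_const.
have good_rev : goodperm b1 b2 b3 (rev_perm n) = ~~ (odd n && (n %/ 2 < b1 + b2)).
  move: (modn2 n) => n2; apply/goodpermP/idP => [[_ rev_fix] | no_fix]; last split.
  - apply/negP; case/andP => n_odd mid_b; rewrite n_odd in n2.
    have mid_n : n %/ 2 < n by lia.
    by move: (rev_fix (Ordinal mid_n) mid_b); rewrite rev_permE /=; lia.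
  - by move=> i j ij _; rewrite !rev_permE; have := ltn_ord j; lia.
  - move=> i ib; rewrite rev_permE; apply/eqP => fixed; move/negP: no_fix; apply.
    have := ltn_ord i; move: n2; case: (odd n) => /=; lia.
have good_eq p : goodperm b1 b2 b3 p -> p = rev_perm n.
  case/goodpermP => p_dec _; apply: eq_rev_perm => i j ij.
  exact: p_dec ij (blk_const _ _ (ltn_ord i) (ltn_ord j)).
rewrite -good_rev; case: (boolP (goodperm b1 b2 b3 (rev_perm n))) => [rev_good | rev_bad] /=.
  rewrite -(cards1 (rev_perm n)); apply: eq_card => p; rewrite !inE.
  by apply/idP/eqP => [/good_eq | ->].
apply/eqP; rewrite cards_eq0; apply/eqP/setP => p; rewrite !inE.
by apply/negbTE/negP => /[dup] /good_eq ->; apply/negP.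
Qed.

Lemma G_x00 a1 : G a1 0 0 = (if odd a1 then 0 else 1).
Proof.
rewrite G_s0 /Nm card_goodperm_one_block => [|i j ia ja]; last by rewrite /blk; lia.
rewrite !subn0 !addn0; move: (modn2 a1); case: (odd a1) => //= a1_odd.
by rewrite (_ : a1 %/ 2 < a1) //; lia.
Qed.

Lemma G_x0x a1 : G a1 0 a1 = 1.
Proof.
rewrite G_diag /Nm card_goodperm_one_block => [|i j ia ja]; last by rewrite /blk; lia.
by rewrite subnn sub0n ltn0 andbF.
Qed.

(* Position [a] holds [v]; positions [0, a) list [0, a] minus [v] in decreasing order. *)
Definition tail1_perm a (v : 'I_(a + 1)) : {perm 'I_(a + 1)} :=
  nat_perm (a + 1) (fun j => if j == a then v : nat else if j < a - v then a - j else a.-1 - j).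

Lemma tail1_permE a v (j : 'I_(a + 1)) :
  tail1_perm v j =
    (if j == a :> nat then v : nat else if j < a - v then a - j else a.-1 - j) :> nat.
Proof. by rewrite nat_permE // => [i | i l]; have := ltn_ord v; repeat case: ifP; lia. Qed.

Lemma tail1_perm_end a (v : 'I_(a + 1)) : tail1_perm v (rshift a ord0) = v.
Proof. by apply: val_inj; rewrite /= tail1_permE /= addn0 eqxx. Qed.

Lemma eq_tail1_perm a (p : {perm 'I_(a + 1)}) :
  (forall i j : 'I_(a + 1), i < j < a -> p j < p i) -> p = tail1_perm (p (rshift a ord0)).
Proof.
move=> p_dec; apply: (eq_perm_decreasing_prefix p_dec) => [i j /andP [ij ja] | i ai].
  by rewrite !tail1_permE; have := ltn_ord (p (rshift a ord0)); repeat case: ifP; lia.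
have -> : i = rshift a ord0 by apply/val_inj; have := ltn_ord i; rewrite /=; lia.
by rewrite tail1_perm_end.
Qed.

(* For even [a] the only possible fixed points are [a] (when [v = a]) and [a %/ 2]
   (when [v < a %/ 2]). *)
Lemma goodperm_tail1_perm a (v : 'I_(a + 1)) : ~~ odd a ->
  goodperm a 1 0 (tail1_perm v) = (a %/ 2 <= v < a).
Proof.
move=> a_even; have a_mod2 : a %% 2 = 0 by rewrite modn2 (negbTE a_even).
have v_lt := ltn_ord v; apply/goodpermP/idP => [[_ p_fix] | v_range]; last split.
- have end_lt : rshift a (@ord0 0) < a + 1 by rewrite /=; lia.
  have mid_lt : a %/ 2 < a + 1 by lia.
  move: (p_fix _ end_lt) (p_fix (Ordinal mid_lt) ltac:(rewrite /=; lia)).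
  by rewrite !tail1_permE /=; repeat case: ifP; lia.
- move=> i j ij; rewrite /blk !tail1_permE; have := ltn_ord j.
  by repeat case: ifP; lia.
- move=> i _; rewrite tail1_permE; have := ltn_ord i.
  by repeat case: ifP; lia.
Qed.

Lemma G_x10 a1 : ~~ odd a1 -> G a1 1 0 = a1 %/ 2.
Proof.
move=> a1_even; have a1_mod2 : a1 %% 2 = 0 by rewrite modn2 (negbTE a1_even).
pose V := [set v : 'I_(a1 + 1) | a1 %/ 2 <= v < a1].
rewrite G_s0 /Nm !subn0.
have -> : [set p | goodperm a1 1 0 p] = @tail1_perm a1 @: V.
  apply/setP => p; rewrite inE; apply/idP/imsetP => [p_good | [v v_range ->]].
    have p_tail : p = tail1_perm (p (rshift a1 ord0)).
      apply: eq_tail1_perm => i j /andP [ij ja].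
      by case/goodpermP: p_good => + _; apply => //; rewrite /blk; lia.
    by exists (p (rshift a1 ord0)); rewrite // inE -goodperm_tail1_perm // -p_tail.
  by move: v_range; rewrite inE goodperm_tail1_perm.
rewrite card_imset => [|v w /(congr1 (fun p : {perm _} => p (rshift a1 ord0)))].
  by rewrite card_ord_range; lia.
by rewrite !tail1_perm_end.
Qed.

(* Positions [a] and [a + 1] hold [u] and [w]; positions [0, a) list [0, a + 1] minus [u] and [w]
   in decreasing order, provided [w < u]. *)
Definition tail2_perm a (u w : 'I_(a + 2)) : {perm 'I_(a + 2)} :=
  nat_perm (a + 2) (fun j =>
    if j == a then u : nat else if j == a.+1 then w : nat
    else if j < a.+1 - u then a.+1 - j else if j < a - w then a - j else a.-1 - j).

Lemma tail2_permE a (u w j : 'I_(a + 2)) : w < u ->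
  tail2_perm u w j =
    (if j == a :> nat then u : nat else if j == a.+1 :> nat then w : nat
     else if j < a.+1 - u then a.+1 - j else if j < a - w then a - j else a.-1 - j) :> nat.
Proof.
by move=> wu; rewrite nat_permE // => [i | i l]; have := ltn_ord u; repeat case: ifP; lia.
Qed.

Lemma tail2_perm_end0 a (u w : 'I_(a + 2)) : w < u -> tail2_perm u w (rshift a ord0) = u.
Proof. by move=> wu; apply: val_inj; rewrite /= tail2_permE //= addn0 eqxx. Qed.

Lemma tail2_perm_end1 a (u w : 'I_(a + 2)) : w < u -> tail2_perm u w (rshift a ord_max) = w.
Proof.
by move=> wu; apply: val_inj; rewrite /= tail2_permE //= addn1 (gtn_eqF (ltnSn a)) eqxx.
Qed.

Lemma eq_tail2_perm a (p : {perm 'I_(a + 2)}) :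
  (forall i j : 'I_(a + 2), i < j < a -> p j < p i) ->
  p (rshift a ord_max) < p (rshift a ord0) ->
  p = tail2_perm (p (rshift a ord0)) (p (rshift a ord_max)).
Proof.
move=> p_dec wu; apply: (eq_perm_decreasing_prefix p_dec) => [i j /andP [ij ja] | i ai].
  by rewrite !tail2_permE //; have := ltn_ord (p (rshift a ord0)); repeat case: ifP; lia.
have [i_a | i_a1] : i = rshift a ord0 \/ i = rshift a ord_max.
  by have := ltn_ord i; case: (ltngtP i a) => i_a; [lia | right | left]; apply/val_inj => /=; lia.
- by rewrite i_a tail2_perm_end0.
- by rewrite i_a1 tail2_perm_end1.
Qed.

(* For odd [a] the only possible fixed points are [a] (when [u = a]), [(a + 1) %/ 2] (when
   [u < (a + 1) %/ 2]) and [(a - 1) %/ 2] (when [(a + 1) %/ 2 <= w]). *)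
Lemma goodperm_tail2_perm a (u w : 'I_(a + 2)) : odd a -> w < u ->
  goodperm a 2 0 (tail2_perm u w) = [&& (a + 1) %/ 2 <= u, u != a :> nat & w < (a + 1) %/ 2].
Proof.
move=> a_odd wu; have a_mod2 : a %% 2 = 1 by rewrite modn2 a_odd.
have u_lt := ltn_ord u; apply/goodpermP/idP => [[_ p_fix] | uw_range]; last split.
- have end_lt : rshift a (@ord0 1) < a + 2 by rewrite /=; lia.
  have mid_lt : (a + 1) %/ 2 < a + 2 by lia.
  have mid'_lt : (a - 1) %/ 2 < a + 2 by lia.
  move: (p_fix _ end_lt) (p_fix (Ordinal mid_lt) ltac:(rewrite /=; lia)).
  move: (p_fix (Ordinal mid'_lt) ltac:(rewrite /=; lia)).
  by rewrite !tail2_permE //=; repeat case: ifP; lia.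
- move=> i j ij; rewrite /blk !tail2_permE //; have := ltn_ord j.
  by repeat case: ifP; lia.
- move=> i _; rewrite tail2_permE //; have := ltn_ord i; move: uw_range.
  by repeat case: ifP; lia.
Qed.

Lemma G_x20 a1 : odd a1 -> G a1 2 0 = ((a1 + 1) %/ 2) ^ 2.
Proof.
move=> a1_odd; have a1_mod2 : a1 %% 2 = 1 by rewrite modn2 a1_odd.
set h := (a1 + 1) %/ 2.
pose U := [set u : 'I_(a1 + 2) | h <= u < a1 + 2] :\ rshift a1 ord0.
pose W := [set w : 'I_(a1 + 2) | 0 <= w < h].
have UW_lt x : x \in setX U W -> x.2 < x.1.
  by rewrite !inE => /andP [/andP [_ /andP [hu _]] /andP [_ wh]]; apply: leq_trans wh hu.
rewrite G_s0 /Nm !subn0.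
have -> : [set p | goodperm a1 2 0 p] = (fun x => tail2_perm x.1 x.2) @: setX U W.
  apply/setP => p; rewrite inE; apply/idP/imsetP => [p_good | [x /[dup] /UW_lt x_lt x_UW ->]].
    have [p_dec _] := goodpermP _ _ _ _ p_good.
    have wu : p (rshift a1 ord_max) < p (rshift a1 ord0) by apply: p_dec; rewrite /= /blk; lia.
    have p_tail : p = tail2_perm (p (rshift a1 ord0)) (p (rshift a1 ord_max)).
      by apply: eq_tail2_perm => // i j /andP [ij ja]; apply: p_dec => //; rewrite /blk; lia.
    exists (p (rshift a1 ord0), p (rshift a1 ord_max)) => //.
    move: p_good; rewrite {1}p_tail goodperm_tail2_perm // !inE -val_eqE /= addn0.
    by have := ltn_ord (p (rshift a1 ord0)); lia.
  by move: x_UW; rewrite goodperm_tail2_perm // !inE -val_eqE /= addn0; lia.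
rewrite card_in_imset => [|[u w] [u' w'] /UW_lt /= wu /UW_lt /= wu']; last first.
  move/(congr1 (fun p : {perm _} => (p (rshift a1 ord0), p (rshift a1 ord_max)))).
  by rewrite /= !tail2_perm_end0 ?tail2_perm_end1 // => [[-> ->]].
have card_U : #|U| = h.
  have := cardsD1 (rshift a1 ord0) [set u : 'I_(a1 + 2) | h <= u < a1 + 2].
  by rewrite card_ord_range // inE /= addn0 -/U (_ : h <= a1 < a1 + 2 = true); lia.
by rewrite cardsX card_U card_ord_range ?subn0 ?expn2 //; lia.
Qed.

Theorem mainTheorem13 :
  (forall a1 : nat, G a1 0 0 = (if odd a1 then 0 else 1)) /\
  (forall a1 : nat, G a1 0 a1 = 1) /\
  (forall a1 : nat, ~~ odd a1 -> G a1 1 0 = a1 %/ 2) /\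
  (forall a1 : nat, odd a1 -> G a1 2 0 = ((a1 + 1) %/ 2) ^ 2).
Proof.
split; first exact: G_x00.
split; first exact: G_x0x.
split; first exact: G_x10.
exact: G_x20.
Qed.
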